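(* Every strongly $n$-torsion clean ring is Dedekind finite (i.e. $ab=1$ implies $ba=1$).
   Context: All rings are associative with identity. A ring $R$ is strongly $n$-torsion clean if every $r\in R$ can be written $r=e+u$ with $e^2=e$, $u$ a unit, $u^n=1$ and $eu=ue$, and $n$ is the smallest natural number with this property. *)

From HB Require Import structures.
From mathcomp Require Import all_boot all_algebra.
Set Implicit Arguments. Unset Strict Implicit. Unset Printing Implicit Defensive.
Import GRing.Theory.
Local Open Scope ring_scope.

Definition is_unit (R : pzRingType) (u : R) : Prop :=
  exists v : R, u * v = 1 /\ v * u = 1.

Definition n_torsion_clean_decomp (R : pzRingType) (n : nat) : Prop :=
  forall r : R, exists e u : R,
    [/\ e * e = e, is_unit u, u ^+ n = 1, e * u = u * e & r = e + u].

Definition strongly_n_torsion_clean (R : pzRingType) (n : nat) : Prop :=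
  [/\ (0 < n)%N, n_torsion_clean_decomp R n &
      forall m : nat, (0 < m)%N -> (m < n)%N -> ~ n_torsion_clean_decomp R m].

Definition dedekind_finite (R : pzRingType) : Prop :=
  forall a b : R, a * b = 1 -> b * a = 1.

From mathcomp Require Import all_boot all_algebra zify.
Import GRing.Theory.
Local Open Scope ring_scope.

(* Write b = e + u with a * b = 1.  Then b ^+ n fixes 1 - e and (b - 1) ^+ n
   fixes e.  The defect g = 1 - b * a satisfies g * b = 0 = a * g, so
   g * a ^+ k * y * (1 - e) = 0 whenever y commutes with b: put a power of b
   larger than k in front of 1 - e and cancel it against a ^+ k.  Since
   a ^+ n * (b - 1) ^+ n = (1 - a) ^+ n and (1 - a) * g = g, this gives
   g = g * a ^+ n * (b - 1) ^+ n * g = g * a ^+ n * e * g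
     = g * a ^+ n * g = 0. *)

Lemma expr_mul_eq {R : pzRingType} {x y p : R} k :
  GRing.comm y p -> x * p = y * p -> x ^+ k * p = y ^+ k * p.
Proof.
move=> cyp xpyp; elim: k => [|k IHk]; first by rewrite !expr0.
by rewrite !exprS -!mulrA IHk -(commrX k (commr_sym cyp)) !mulrA xpyp.
Qed.

Section RightInverse.
Context {R : pzRingType} {a b : R}.
Hypothesis ab1 : a * b = 1.

Lemma expr_rinvK k r : a ^+ k * b ^+ (k + r) = b ^+ r.
Proof.
have akbk : a ^+ k * b ^+ k = 1.
  elim: k => [|k IHk]; first by rewrite !expr0 mulr1.
  by rewrite exprSr exprS -mulrA (mulrA a) ab1 mul1r.
by rewrite exprD mulrA akbk mul1r.
Qed.

Lemma subr1_rinv : 1 - a = a * (b - 1).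
Proof. by rewrite mulrBr ab1 mulr1. Qed.

Lemma expr_subr1_rinv k : (1 - a) ^+ k = a ^+ k * (b - 1) ^+ k.
Proof.
elim: k => [|k IHk]; first by rewrite !expr0 mulr1.
have ca : GRing.comm (1 - a) (a ^+ k).
  by apply/commrX/commr_sym/commrB; [exact: commr1 | exact: commr_refl].
by rewrite exprS IHk mulrA ca subr1_rinv exprSr exprS !mulrA.
Qed.

Let g := 1 - b * a.

Lemma defect_mul_expr r : g * b ^+ r.+1 = 0.
Proof. by rewrite exprS mulrA /g mulrBl mul1r -mulrA ab1 mulr1 subrr mul0r. Qed.

Lemma rinv_mul_defect : a * g = 0.
Proof. by rewrite /g mulrBr mulr1 mulrA ab1 mul1r subrr. Qed.

Lemma defect_mul_fixed (h y : R) N k : (0 < N)%N ->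
  b ^+ N * h = h -> GRing.comm y b -> g * a ^+ k * y * h = 0.
Proof.
move=> N_gt0 bNh cyb.
have bNjh j : b ^+ (N * j) * h = h.
  by elim: j => [|j IHj]; rewrite ?muln0 ?mul1r // mulnS exprD -mulrA IHj.
have [r Nk] : exists r, (N * k.+1 = k + r.+1)%N.
  by exists (N * k.+1 - k.+1)%N; have := leq_pmull k.+1 N_gt0; lia.
rewrite -(bNjh k.+1) mulrA -(mulrA _ y) (commrX _ cyb) mulrA -(mulrA g).
by rewrite Nk expr_rinvK defect_mul_expr !mul0r.
Qed.

Lemma rinv_is_linv_of_split {e : R} {N M : nat} : (0 < N)%N -> (0 < M)%N ->
  b ^+ N * (1 - e) = 1 - e -> (b - 1) ^+ M * e = e -> b * a = 1.
Proof.
move=> N_gt0 M_gt0 bN bM.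
have fixed y : GRing.comm y b -> g * a ^+ M * y * (1 - e) * g = 0.
  by move=> cyb; rewrite (defect_mul_fixed _ _ _ M N_gt0 bN cyb) mul0r.
have gg : g * g = g.
  by rewrite {1}/g mulrBl mul1r -mulrA rinv_mul_defect mulr0 subr0.
have gaMg : g * a ^+ M * g = 0.
  case: M M_gt0 {bM fixed} => // M _.
  by rewrite exprSr -!mulrA rinv_mul_defect !mulr0.
have g_fix : (1 - a) ^+ M * g = g.
  have ag : (1 - a) * g = 1 * g by rewrite mulrBl rinv_mul_defect subr0.
  by rewrite (expr_mul_eq M (commr_sym (commr1 g)) ag) expr1n mul1r.
have cbM : GRing.comm ((b - 1) ^+ M) b.
  by apply/commr_sym/commrX/commrB; [exact: commr_refl | exact: commr1].
have g0 : g = 0.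
  have -> : g = g * a ^+ M * (b - 1) ^+ M * e * g
              + g * a ^+ M * (b - 1) ^+ M * (1 - e) * g.
    by rewrite -mulrDl -mulrDr subrKC mulr1 -(mulrA g) -expr_subr1_rinv
      -mulrA g_fix gg.
  rewrite fixed // addr0 -(mulrA _ _ e) bM -[e](subKr 1).
  rewrite (mulrBr (g * a ^+ M)) mulr1 (mulrBl g) gaMg.
  by rewrite -(mulr1 (g * a ^+ M)) fixed ?subrr //; exact: commr_sym (commr1 b).
by move/eqP: g0; rewrite subr_eq0 => /eqP.
Qed.
End RightInverse.

Theorem corollary2p5 (R : pzRingType) (n : nat) :
  strongly_n_torsion_clean R n -> dedekind_finite R.
Proof.
case=> n_gt0 decomp _ a b ab1.
have [e [u [ee _ un1 eu def_b]]] := decomp b.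
have cue : GRing.comm u e := commr_sym eu.
apply: (rinv_is_linv_of_split ab1 (e := e) n_gt0 n_gt0).
- have bf : b * (1 - e) = u * (1 - e).
    by rewrite def_b mulrDl mulrBr mulr1 ee subrr add0r.
  by rewrite (expr_mul_eq n (commrB (commr1 u) cue) bf) un1 mul1r.
- have b1e : (b - 1) * e = u * e.
    by rewrite def_b mulrBl mulrDl ee mul1r addrAC subrr add0r.
  by rewrite (expr_mul_eq n cue b1e) un1 mul1r.
Qed.
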